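(* There are absolute constants $C,c>0$ such that the following holds. Let $P$ be a set of $n$ points in $\mathbb{R}^2$ in general position, let $r\ge 1$ be an integer, and let $\Lambda(r)$ be a slab decomposition of $P$ as defined below. Then for every $\epsilon'\ge 0$ there is a set of at most $C\, r\cdot f_2(c\,\epsilon' r)$ points in $\mathbb{R}^2$ that pierces (i.e. meets) every convex set $K$ that is $\epsilon'$-crowded in $\Lambda(r)$.
   Context: General position: no three points of $P$ are collinear and no two lie on a common vertical line. $f_2(x)$ denotes the smallest integer $f$ such that every finite point set $P'\subset\mathbb{R}^2$ admits a set of at most $f$ points meeting every convex set $K$ with $|K\cap P'|\ge x|P'|$; by convention $f_2(x)=1$ for $x\ge 1$. For an integer $r\ge1$, ${\cal Y}(r)$ is a set of $r$ vertical lines, none passing through a point of $P$, such that each of the $r+1$ open vertical slabs (the two extreme ones being halfplanes) of $\mathbb{R}^2\setminus\bigcup{\cal Y}(r)$ contains between $\lfloor n/(r+1)\rfloor$ and $\lceil n/(r+1)\rceil$ points of $P$; $\Lambda(r)$ denotes this collection of slabs. A convex set $K$ is $\epsilon'$-crowded in $\Lambda(r)$ if some slab of $\Lambda(r)$ contains at least $\epsilon' n$ points of $P\cap K$, and $\epsilon'$-spread otherwise. *)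

From Stdlib Require Import Reals Lra List Sorting.Sorted Classical ClassicalEpsilon.
Import ListNotations.
Open Scope R_scope.

Definition point : Type := (R * R)%type.

Definition decP (A : Prop) : bool :=
  if excluded_middle_informative A then true else false.

Definition card_in (S : point -> Prop) (P : list point) : nat :=
  length (filter (fun p => decP (S p)) P).

Definition convex (K : point -> Prop) : Prop :=
  forall (p q : point) (t : R), K p -> K q -> 0 <= t <= 1 ->
    K (t * fst p + (1 - t) * fst q, t * snd p + (1 - t) * snd q).

Definition collinear (p q s : point) : Prop :=
  (fst q - fst p) * (snd s - snd p) - (snd q - snd p) * (fst s - fst p) = 0.

Definition general_position (P : list point) : Prop :=
  NoDup P /\
  (forall p q, In p P -> In q P -> p <> q -> fst p <> fst q) /\
  (forall p q s, In p P -> In q P -> In s P ->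
     p <> q -> q <> s -> p <> s -> ~ collinear p q s).

(* Slab i (0 <= i <= r) determined by the sorted x-coordinates ys of the
   r vertical lines: slab 0 and slab r are open halfplanes. *)
Definition in_slab (ys : list R) (i : nat) (p : point) : Prop :=
  (i = 0%nat \/ nth (i - 1) ys 0 < fst p) /\
  (i = length ys \/ fst p < nth i ys 0).

(* ys : the x-coordinates of the lines of Y(r); Lambda(r) = the slabs. *)
Definition slab_decomposition (P : list point) (r : nat) (ys : list R) : Prop :=
  length ys = r /\
  Sorted Rlt ys /\
  (forall y p, In y ys -> In p P -> fst p <> y) /\
  (forall i, (i <= r)%nat ->
     (length P / (r + 1) <= card_in (in_slab ys i) P <=
      (length P + r) / (r + 1))%nat).

Definition crowded (eps : R) (P : list point) (ys : list R)
  (K : point -> Prop) : Prop :=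
  exists i, (i <= length ys)%nat /\
    INR (card_in (fun p => K p /\ in_slab ys i p) P) >= eps * INR (length P).

Definition weak_net_bound (x : R) (f : nat) : Prop :=
  forall P' : list point, P' <> [] -> NoDup P' ->
    exists Q : list point, (length Q <= f)%nat /\
      forall K, convex K ->
        INR (card_in K P') >= x * INR (length P') ->
        exists q, In q Q /\ K q.

(* is_f2 x f  :<->  f_2(x) = f  (f_2(x) = 1 for x >= 1 by convention,
   otherwise the least f with weak_net_bound x f; if no such f exists,
   f_2(x) is infinite and no f satisfies is_f2 x f). *)
Definition is_f2 (x : R) (f : nat) : Prop :=
  (1 <= x /\ f = 1%nat) \/
  (x < 1 /\ weak_net_bound x f /\ forall g, weak_net_bound x g -> (f <= g)%nat).

(* If the n points of P are fewer than r, P itself pierces every crowded set.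
   Otherwise each slab holds at most (n + r)/(r + 1) <= 2n/r points, so a
   convex set with eps' n points of P in slab i captures at least an
   (eps' r/2)-fraction of the slab's points; a weak epsilon-net of size
   f_2(eps' r/4) for each of the r + 1 slabs gives at most (r + 1) f <= 2 r f
   points in total. *)

From Stdlib Require Import Reals List Lra Lia Psatz ClassicalEpsilon.
Import ListNotations.
Open Scope R_scope.

Definition pierces {T : Type} (Q : list T) (Fam : (T -> Prop) -> Prop) : Prop :=
  forall K, Fam K -> exists q, In q Q /\ K q.

Lemma decP_true (A : Prop) : decP A = true <-> A.
Proof.
  unfold decP; destruct (excluded_middle_informative A); split; auto; discriminate.
Qed.

Lemma decP_and (A B : Prop) : decP (A /\ B) = (decP A && decP B)%bool.
Proof.
  apply Bool.eq_true_iff_eq.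
  rewrite Bool.andb_true_iff, !decP_true; reflexivity.
Qed.

Lemma card_in_filter (K S : point -> Prop) (P : list point) :
  card_in K (filter (fun p => decP (S p)) P) = card_in (fun p => K p /\ S p) P.
Proof.
  unfold card_in; induction P as [|a P IH]; simpl; auto.
  rewrite decP_and.
  destruct (decP (S a)), (decP (K a)) eqn:HKa; simpl; rewrite ?HKa; simpl; rewrite ?IH; reflexivity.
Qed.

Lemma card_in_le_length (S : point -> Prop) (L : list point) :
  (card_in S L <= length L)%nat.
Proof. apply filter_length_le. Qed.

Lemma card_in_pos_exists (S : point -> Prop) (L : list point) :
  (0 < card_in S L)%nat -> exists p, In p L /\ S p.
Proof.
  unfold card_in; induction L as [|a L IH]; simpl; [lia|].
  destruct (decP (S a)) eqn:Ha; simpl; intros Hpos.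
  - exists a; split; [left; reflexivity| apply decP_true; exact Ha].
  - destruct (IH Hpos) as [p [Hp HSp]]; eauto.
Qed.

Lemma card_in_full (S : point -> Prop) (L : list point) :
  (length L <= card_in S L)%nat -> forall p, In p L -> S p.
Proof.
  unfold card_in; induction L as [|a L IH]; simpl; [tauto|].
  assert (Hle := card_in_le_length S L); unfold card_in in Hle.
  destruct (decP (S a)) eqn:Ha; simpl; intros Hfull p [<-|Hp].
  - apply decP_true; exact Ha.
  - apply IH; [lia | exact Hp].
  - lia.
  - lia.
Qed.

(* For [x >= 1] the convention [f_2(x) = 1] is sound: such a [K] contains all of
   [P'], so any single point of [P'] pierces it. *)
Lemma is_f2_weak_net_bound (x : R) (f : nat) : is_f2 x f -> weak_net_bound x f.
Proof.
  intros [[Hx ->]|[_ [Hw _]]]; [|exact Hw].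
  intros [|p P'] Hne _; [congruence|].
  exists [p]; split; [simpl; lia|].
  intros K _ HK; exists p; split; [left; reflexivity|].
  apply (card_in_full K (p :: P')); [|left; reflexivity].
  apply INR_le; assert (0 <= INR (length (p :: P'))) by apply pos_INR; nra.
Qed.

(* Tested on a one-point set with the convex sets [True] and [False]. *)
Lemma is_f2_pos (x : R) (f : nat) : is_f2 x f -> 0 < x /\ (1 <= f)%nat.
Proof.
  intros Hf; split.
  - destruct Hf as [[Hx _]|[_ [Hw _]]]; [lra|].
    apply Rnot_le_lt; intros Hx.
    destruct (Hw [(0, 0)]) as [Q [_ HQ]];
      [discriminate| repeat constructor; simpl; tauto|].
    destruct (HQ (fun _ => False)) as [q [_ []]]; [unfold convex; tauto|].
    assert (0 <= INR (card_in (fun _ => False) [(0, 0)])) by apply pos_INR.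
    simpl; lra.
  - destruct Hf as [[_ ->]|[Hx1 [Hw _]]]; [lia|].
    destruct (Hw [(0, 0)]) as [Q [HQ HK]];
      [discriminate| repeat constructor; simpl; tauto|].
    destruct (HK (fun _ => True)) as [q [Hq _]]; [unfold convex; tauto| |].
    + unfold card_in; simpl; rewrite (proj2 (decP_true True) I); simpl; lra.
    + destruct Q; simpl in *; [tauto | lia].
Qed.

(* The threshold [t > 0] rules out the empty list, on which a weak net must
   pierce even the empty convex set. *)
Lemma weak_net_above_threshold (x t : R) (f : nat) (L : list point) :
  weak_net_bound x f -> NoDup L -> 0 < t -> x * INR (length L) <= t ->
  exists Q, (length Q <= f)%nat /\
    pierces Q (fun K => convex K /\ INR (card_in K L) >= t).
Proof.
  intros Hw HL Ht Hxt.
  destruct L as [|p L].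
  - exists []; split; [simpl; lia|].
    intros K [_ HK]; unfold card_in in HK; simpl in HK; lra.
  - destruct (Hw (p :: L)) as [Q [HQ HK]]; [discriminate | exact HL |].
    exists Q; split; [exact HQ|].
    intros K [Kc HcK]; apply HK; [exact Kc | lra].
Qed.

Lemma pierces_finite_union (T : Type) (Fam : nat -> (T -> Prop) -> Prop)
  (m f : nat) :
  (forall i, (i < m)%nat -> exists Q, (length Q <= f)%nat /\ pierces Q (Fam i)) ->
  exists Q, (length Q <= m * f)%nat /\
    pierces Q (fun K => exists i, (i < m)%nat /\ Fam i K).
Proof.
  induction m as [|m IH]; intros Hnets.
  - exists []; split; [simpl; lia|]. intros K [i [Hi _]]; lia.
  - destruct IH as [Q [HQ HK]]; [intros i Hi; apply Hnets; lia|].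
    destruct (Hnets m ltac:(lia)) as [Qm [HQm HKm]].
    exists (Q ++ Qm); split; [rewrite length_app; simpl; lia|].
    intros K [i [Hi HFi]].
    destruct (Nat.eq_dec i m) as [->|Hne].
    + destruct (HKm K HFi) as [q [Hq Kq]]; exists q; split; [apply in_or_app|]; auto.
    + assert (Him : (i < m)%nat) by lia.
      destruct (HK K (ex_intro _ i (conj Him HFi))) as [q [Hq Kq]].
      exists q; split; [apply in_or_app|]; auto.
Qed.

Lemma slab_card_bound (P : list point) (r : nat) (ys : list R) (i : nat) :
  slab_decomposition P r ys -> (i <= r)%nat -> (r <= length P)%nat ->
  (r * card_in (in_slab ys i) P <= 2 * length P)%nat.
Proof.
  intros [_ [_ [_ Hcard]]] Hi Hr.
  destruct (Hcard i Hi) as [_ Hup].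
  assert (Hdiv : ((length P + r) / (r + 1) * (r + 1) <= length P + r)%nat).
  { rewrite Nat.mul_comm; apply Nat.Div0.mul_div_le. }
  nia.
Qed.

Lemma crowded_pierced_by_P (eps : R) (P : list point) (ys : list R)
  (K : point -> Prop) :
  0 < eps -> P <> [] -> crowded eps P ys K -> exists p, In p P /\ K p.
Proof.
  intros He HP [i [_ Hc]].
  assert (Hn : 1 <= INR (length P))
    by (destruct P; [congruence| apply (le_INR 1); simpl; lia]).
  destruct (card_in_pos_exists (fun p => K p /\ in_slab ys i p) P)
    as [p [Hp [Kp _]]]; [|eauto].
  apply INR_lt; simpl; nra.
Qed.

Lemma crowded_net_many_points (P : list point) (r : nat) (ys : list R)
  (eps : R) (f : nat) :
  general_position P -> (1 <= r)%nat -> (r <= length P)%nat ->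
  slab_decomposition P r ys -> 0 < eps ->
  weak_net_bound (eps * INR r / 4) f ->
  exists Q, (length Q <= (r + 1) * f)%nat /\
    pierces Q (fun K => convex K /\ crowded eps P ys K).
Proof.
  intros [HnodupP _] Hr HrP HS He Hw.
  assert (Hn : 1 <= INR (length P)) by (apply (le_INR 1); lia).
  set (slab i := filter (fun p => decP (in_slab ys i p)) P).
  destruct (pierces_finite_union point
              (fun i K => convex K /\ INR (card_in K (slab i)) >= eps * INR (length P))
              (r + 1) f) as [Q [HQ HK]].
  - intros i Hi.
    apply (weak_net_above_threshold (eps * INR r / 4));
      [exact Hw | apply NoDup_filter, HnodupP | nra |].
    assert (Hbound := slab_card_bound P r ys i HS ltac:(lia) HrP).
    apply le_INR in Hbound; rewrite !mult_INR in Hbound.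
    change (length (slab i)) with (card_in (in_slab ys i) P).
    assert (0 <= INR (card_in (in_slab ys i) P)) by apply pos_INR.
    simpl in Hbound; nra.
  - exists Q; split; [exact HQ|].
    intros K [Kc [i [Hi Hc]]].
    destruct HS as [Hlen _].
    apply HK; exists i; split; [lia|].
    split; [exact Kc|]; unfold slab; rewrite card_in_filter; exact Hc.
Qed.

Theorem mainTheorem3 :
  exists C c : R, 0 < C /\ 0 < c /\
    forall (P : list point) (r : nat) (ys : list R),
      P <> nil ->
      general_position P ->
      (1 <= r)%nat ->
      slab_decomposition P r ys ->
      forall eps : R, 0 <= eps ->
      forall f : nat, is_f2 (c * eps * INR r) f ->
      exists Q : list point,
        INR (length Q) <= C * INR r * INR f /\
        forall K : point -> Prop, convex K -> crowded eps P ys K ->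
          exists q, In q Q /\ K q.
Proof.
  exists 2, (1/4); split; [lra|]; split; [lra|].
  intros P r ys HP HG Hr HS eps _ f Hf.
  assert (HrR : 1 <= INR r) by (apply (le_INR 1); exact Hr).
  destruct (is_f2_pos _ _ Hf) as [Hx Hf1].
  assert (HfR : 1 <= INR f) by (apply (le_INR 1); exact Hf1).
  assert (He : 0 < eps) by nra.
  destruct (Nat.lt_ge_cases (length P) r) as [Hfew|Hmany].
  - exists P; split.
    + apply lt_INR in Hfew; nra.
    + intros K _ Hc; exact (crowded_pierced_by_P eps P ys K He HP Hc).
  - apply is_f2_weak_net_bound in Hf.
    replace (1 / 4 * eps * INR r) with (eps * INR r / 4) in Hf by lra.
    destruct (crowded_net_many_points P r ys eps f HG Hr Hmany HS He Hf)
      as [Q [HQ HK]].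
    exists Q; split.
    + apply le_INR in HQ; rewrite mult_INR, plus_INR in HQ; simpl in HQ; nra.
    + intros K Kc Hc; exact (HK K (conj Kc Hc)).
Qed.
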